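(* Let $s_0\in(0,1)$ and $\tau,\eta,\lambda>0$, and let $(I_j^0)_{j\in\mathbb{Z}}$ be a finitely supported sequence with $I_j^0\in[0,1)$ for all $j$ and $I_j^0>0$ for at least one $j$. Define $f(v):=s_0(1-e^{-\tau v})-\eta v$ and $\mathscr{R}_0:=s_0\tau/\eta$. Then the stationary equation $$0=f(\mathcal{I}_j)+I_j^0+\lambda\left(\mathcal{I}_{j-1}-2\mathcal{I}_j+\mathcal{I}_{j+1}\right),\qquad j\in\mathbb{Z},$$ admits a unique positive, bounded solution $(\mathcal{I}_j^\infty)_{j\in\mathbb{Z}}$, and it satisfies $\lim_{|j|\to+\infty}\mathcal{I}_j^\infty=0$ if $\mathscr{R}_0\le 1$, and $\lim_{|j|\to+\infty}\mathcal{I}_j^\infty=\mathcal{I}_*$ if $\mathscr{R}_0>1$, where $\mathcal{I}_*>0$ is the unique positive zero of $f$.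
   Context: This is the stationary version of the lattice differential equation $\mathcal{I}_j'(t)=f(\mathcal{I}_j(t))+I_j^0+\lambda(\mathcal{I}_{j-1}(t)-2\mathcal{I}_j(t)+\mathcal{I}_{j+1}(t))$, $j\in\mathbb{Z}$, satisfied by the cumulative density of infected individuals in an SIR model on $\mathbb{Z}$ with initial susceptible density $s_0$ and initial infected density $I_j^0$. *)

From Stdlib Require Import Reals ZArith Lra.
Open Scope R_scope.

Definition fSIR (s0 tau eta : R) (v : R) : R :=
  s0 * (1 - exp (- tau * v)) - eta * v.

Definition R0_SIR (s0 tau eta : R) : R := s0 * tau / eta.

Definition stationary_solution (s0 tau eta lambda : R) (I0 : Z -> R) (I : Z -> R) : Prop :=
  forall j : Z,
    0 = fSIR s0 tau eta (I j) + I0 j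
        + lambda * (I (j - 1)%Z - 2 * I j + I (j + 1)%Z).

Definition positive_seq (I : Z -> R) : Prop := forall j : Z, 0 < I j.

Definition bounded_seq (I : Z -> R) : Prop := exists M : R, forall j : Z, Rabs (I j) <= M.

Definition finitely_supported (I0 : Z -> R) : Prop :=
  exists N : Z, forall j : Z, (N < Z.abs j)%Z -> I0 j = 0.

Definition lim_abs_infty (I : Z -> R) (L : R) : Prop :=
  forall eps : R, 0 < eps ->
    exists N : Z, forall j : Z, (N <= Z.abs j)%Z -> Rabs (I j - L) < eps.

(* Writing the equation as the fixed-point problem I = T I with the monotone map
   (T I)_j = (lam (I_(j-1) + I_(j+1)) + s0 (1 - e^(-tau I_j)) + I0_j) / (2 lam + eta),
   the iterates of T from 0 increase to the minimal nonnegative solution; it lies below every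
   nonnegative solution and is positive by the strong maximum principle.
   Since f(v)/v is decreasing, f is negative above c and positive on (0, c), where c = 0 if
   R0 <= 1 and c = I* otherwise.  Beyond the support of I0 a solution restricted to a half-line
   solves lam (a_k - 2 a_(k+1) + a_(k+2)) + f(a_(k+1)) = 0, which makes it convex above c and
   concave below c; a bounded positive tail is therefore trapped on one side of c, monotone,
   and converges to a root of f, that is, to c.
   Uniqueness: if I <= J are two such solutions, the Wronskian I_j J_(j+1) - I_(j+1) J_j is
   nondecreasing in j (again because f(v)/v decreases) and tends to 0 at both ends, so it
   vanishes; at a site where I0 > 0 this forces J = I, and the vanishing Wronskian propagates
   the equality to all of Z. *)

From Stdlib Require Import Reals ZArith Lra Lia Psatz.
Open Scope R_scope.

Lemma one_minus_exp_ratio_lt (t u v : R) : 0 < t -> 0 < u < v ->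
  u * (1 - exp (- t * v)) < v * (1 - exp (- t * u)).
Proof.
  intros Ht [Hu Huv].
  assert (Hexp : forall x, x <> - t * u -> exp (- t * u) * (1 + x - - t * u) < exp x).
  { intros x Hx.
    replace (exp x) with (exp (- t * u) * exp (x - - t * u))
      by (rewrite <- exp_plus; f_equal; ring).
    apply Rmult_lt_compat_l; [apply exp_pos |].
    replace (1 + x - - t * u) with (1 + (x - - t * u)) by ring.
    apply exp_ineq1; lra. }
  (* convexity of exp: its tangent at [- t * u] lies below it at [0] and at [- t * v] *)
  pose proof (Hexp 0 ltac:(nra)) as H0. pose proof (Hexp (- t * v) ltac:(nra)) as Hv.
  rewrite exp_0 in H0.
  nra.
Qed.

Definition sign_split (F : R -> R) (c : R) : Prop :=
  (forall v, c < v -> F v < 0) /\ (forall v, 0 < v < c -> 0 < F v).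

Lemma sign_split_pos_root (F : R -> R) (c v : R) :
  sign_split F c -> 0 < v -> F v = 0 -> v = c.
Proof.
  intros [Habove Hbelow] Hv Hroot.
  destruct (Rtotal_order v c) as [Hlt | [Heq | Hgt]]; auto.
  - specialize (Hbelow v (conj Hv Hlt)). lra.
  - specialize (Habove v Hgt). lra.
Qed.

Section SIR_nonlinearity.

Variables s0 tau eta : R.
Hypotheses (Hs0 : 0 < s0) (Htau : 0 < tau) (Heta : 0 < eta).

Local Notation f := (fSIR s0 tau eta).

Lemma fSIR_continuous : continuity f.
Proof. intro x. unfold fSIR. reg. Qed.

Lemma fSIR_ratio_lt (u v : R) : 0 < u < v -> u * f v < v * f u.
Proof. intros Huv. pose proof (one_minus_exp_ratio_lt tau u v Htau Huv). unfold fSIR. nra. Qed.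

Lemma fSIR_ratio_le (u v : R) : 0 < u <= v -> u * f v <= v * f u.
Proof.
  intros [Hu [Huv | <-]]; [| lra].
  left. apply fSIR_ratio_lt. lra.
Qed.

Lemma R0_SIR_mul_eta : R0_SIR s0 tau eta * eta = s0 * tau.
Proof. unfold R0_SIR. field. lra. Qed.

Lemma fSIR_neg_of_R0_le_1 (v : R) : R0_SIR s0 tau eta <= 1 -> 0 < v -> f v < 0.
Proof.
  intros HR Hv. pose proof R0_SIR_mul_eta.
  assert (Hexp : 1 + - tau * v < exp (- tau * v)) by (apply exp_ineq1; nra).
  assert (0 <= (1 - R0_SIR s0 tau eta) * eta * v) by (apply Rmult_le_pos; nra).
  unfold fSIR. nra.
Qed.

Lemma fSIR_pos_near_0 : 1 < R0_SIR s0 tau eta -> exists x, 0 < x /\ 0 < f x.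
Proof.
  intros HR. pose proof R0_SIR_mul_eta.
  assert (Hgap : 0 < s0 * tau - eta) by nra.
  set (x := (s0 * tau - eta) / (2 * eta * tau)).
  assert (Hx : 0 < x) by (unfold x; apply Rdiv_lt_0_compat; nra).
  assert (Htx : 2 * eta * (tau * x) = s0 * tau - eta) by (unfold x; field; lra).
  exists x. split; [exact Hx |].
  (* [1 - exp (- y) >= y / (1 + y)] since [exp y >= 1 + y]; this beats [eta x] for small [x] *)
  assert (Hexp : exp (- tau * x) * (1 + tau * x) <= 1).
  { replace 1 with (exp (- tau * x) * exp (tau * x)) at 2
      by (rewrite <- exp_plus; replace (- tau * x + tau * x) with 0 by ring; apply exp_0).
    apply Rmult_le_compat_l; [left; apply exp_pos | apply exp_ineq1_le]. }
  assert (Hbound : x * (s0 * tau - eta) / 2 <= f x * (1 + tau * x)).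
  { assert (s0 * (exp (- tau * x) * (1 + tau * x)) <= s0 * 1) by (apply Rmult_le_compat_l; lra).
    assert (x * (2 * eta * (tau * x)) = x * (s0 * tau - eta)) by (rewrite Htx; ring).
    unfold fSIR. nra. }
  assert (0 < x * (s0 * tau - eta) / 2)
    by (apply Rdiv_lt_0_compat; [apply Rmult_lt_0_compat |]; lra).
  apply (Rmult_lt_reg_r (1 + tau * x)); nra.
Qed.

Lemma fSIR_root_exists : 1 < R0_SIR s0 tau eta -> exists c, 0 < c /\ f c = 0.
Proof.
  intros HR. destruct fSIR_pos_near_0 as [x [Hx Hfx]]; [exact HR |].
  set (y := x + s0 / eta).
  assert (Hxy : x < y) by (unfold y; assert (0 < s0 / eta) by (apply Rdiv_lt_0_compat; lra); lra).
  assert (Hfy : f y < 0).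
  { assert (eta * y = eta * x + s0) by (unfold y; field; lra).
    pose proof (exp_pos (- tau * y)). unfold fSIR. nra. }
  destruct (IVT (fun v => - f v) x y) as [c [Hc Hfc]]; try lra.
  - intro v. apply continuity_pt_opp. apply fSIR_continuous.
  - exists c. split; lra.
Qed.

Lemma fSIR_sign_split_root (c : R) : 0 < c -> f c = 0 -> sign_split f c.
Proof.
  intros Hc Hfc. split.
  - intros v Hv. pose proof (fSIR_ratio_lt c v (conj Hc Hv)). nra.
  - intros v Hv. pose proof (fSIR_ratio_lt v c Hv). nra.
Qed.

Lemma fSIR_sign_split :
  exists c, sign_split f c /\
    (R0_SIR s0 tau eta <= 1 -> c = 0) /\ (1 < R0_SIR s0 tau eta -> 0 < c /\ f c = 0).
Proof.
  destruct (Rle_lt_dec (R0_SIR s0 tau eta) 1) as [HR | HR].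
  - exists 0. split; [split |].
    + intros v Hv. apply fSIR_neg_of_R0_le_1; assumption.
    + intros v Hv. lra.
    + split; intros; [reflexivity | lra].
  - destruct (fSIR_root_exists HR) as [c [Hc Hfc]].
    exists c. split; [apply fSIR_sign_split_root; assumption |].
    split; intros; [lra | split; assumption].
Qed.

End SIR_nonlinearity.

Lemma Un_cv_const (c : R) : Un_cv (fun _ => c) c.
Proof.
  intros eps Heps. exists 0%nat. intros n _.
  unfold Rdist. rewrite Rminus_diag, Rabs_R0. exact Heps.
Qed.

Lemma Un_cv_S (u : nat -> R) (l : R) : Un_cv u l -> Un_cv (fun n => u (S n)) l.
Proof.
  intros Hu eps Heps. destruct (Hu eps Heps) as [N HN].
  exists N. intros n Hn. apply HN. lia.
Qed.

Definition second_diff (a : nat -> R) (k : nat) : R := a k - 2 * a (S k) + a (S (S k)).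

Lemma bounded_no_uniform_growth (a : nat -> R) (M d : R) (n : nat) :
  0 < d -> (forall k, a k <= M) -> ~ (forall m, d <= a (S (n + m)) - a (n + m)%nat).
Proof.
  intros Hd HM Hgrow.
  assert (Hlin : forall m, a n + INR m * d <= a (n + m)%nat).
  { induction m as [| m IH].
    - rewrite Nat.add_0_r. simpl. lra.
    - rewrite Nat.add_succ_r, S_INR. specialize (Hgrow m). lra. }
  destruct (INR_archimed d (M - a n)) as [m Hm]; [exact Hd |].
  specialize (Hlin m). specialize (HM (n + m)%nat). lra.
Qed.

Lemma convex_above_nonincreasing (a : nat -> R) (M c : R) :
  (forall k, a k <= M) -> (forall k, c < a (S k) -> 0 <= second_diff a k) ->
  forall n, c <= a n -> a (S n) <= a n.
Proof.
  intros HM Hconvex n Hn. apply Rnot_lt_le. intros Hinc.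
  apply (bounded_no_uniform_growth a M (a (S n) - a n) n); [lra | exact HM |].
  assert (Hgrow : forall m, c < a (S (n + m)) /\ a (S n) - a n <= a (S (n + m)) - a (n + m)%nat).
  { induction m as [| m [Habove Hstep]].
    - rewrite Nat.add_0_r. lra.
    - rewrite Nat.add_succ_r. specialize (Hconvex (n + m)%nat Habove).
      unfold second_diff in Hconvex. split; lra. }
  intro m. apply Hgrow.
Qed.

Lemma concave_below_nondecreasing (a : nat -> R) (m c : R) :
  (forall k, m <= a k) -> (forall k, a (S k) < c -> second_diff a k <= 0) ->
  forall n, a n <= c -> a n <= a (S n).
Proof.
  intros Hm Hconcave n Hn.
  enough (- a (S n) <= - a n) by lra.
  apply (convex_above_nonincreasing (fun k => - a k) (- m) (- c)); try (intros; lra).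
  - intro k. specialize (Hm k). lra.
  - intros k Hk. specialize (Hconcave k ltac:(lra)). unfold second_diff in *. lra.
Qed.

Definition tail_equation (lam : R) (F : R -> R) (a : nat -> R) : Prop :=
  forall k, lam * second_diff a k + F (a (S k)) = 0.

Section TailDynamics.

Variables (lam : R) (F : R -> R) (c M : R) (a : nat -> R).
Hypotheses (Hlam : 0 < lam) (Hsplit : sign_split F c) (Htail : tail_equation lam F a)
  (Hpos : forall k, 0 < a k) (Hbnd : forall k, a k <= M).

Lemma tail_second_diff_pos (k : nat) : c < a (S k) -> 0 < second_diff a k.
Proof.
  intros Hk. pose proof (proj1 Hsplit _ Hk). pose proof (Htail k).
  apply (Rmult_lt_reg_l lam); lra.
Qed.

Lemma tail_second_diff_neg (k : nat) : a (S k) < c -> second_diff a k < 0.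
Proof.
  intros Hk. pose proof (proj2 Hsplit _ (conj (Hpos (S k)) Hk)). pose proof (Htail k).
  apply (Rmult_lt_reg_l lam); lra.
Qed.

Lemma tail_nonincreasing_above (n : nat) : c <= a n -> a (S n) <= a n.
Proof.
  apply (convex_above_nonincreasing a M c Hbnd).
  intros k Hk. left. apply tail_second_diff_pos, Hk.
Qed.

Lemma tail_nondecreasing_below (n : nat) : a n <= c -> a n <= a (S n).
Proof.
  apply (concave_below_nondecreasing a 0 c); [intro k; left; apply Hpos |].
  intros k Hk. left. apply tail_second_diff_neg, Hk.
Qed.

Lemma tail_stays_below (n : nat) : a n <= c -> a (S n) <= c.
Proof.
  intros Hn. apply Rnot_lt_le. intros Hcross.
  pose proof (tail_second_diff_pos n Hcross).
  pose proof (tail_nonincreasing_above (S n) ltac:(lra)).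
  unfold second_diff in *. lra.
Qed.

Lemma tail_stays_above (n : nat) : c <= a n -> c <= a (S n).
Proof.
  intros Hn. apply Rnot_lt_le. intros Hcross.
  pose proof (tail_second_diff_neg n Hcross).
  pose proof (tail_nondecreasing_below (S n) ltac:(lra)).
  unfold second_diff in *. lra.
Qed.

Lemma tail_limit_root (l : R) : continuity F -> Un_cv a l -> F l = 0.
Proof.
  intros HF Hl.
  pose proof (Un_cv_S a l Hl) as Hl1. pose proof (Un_cv_S _ l Hl1) as Hl2.
  apply (UL_sequence (fun n => F (a (S n)))); [apply continuity_seq; [apply HF | exact Hl1] |].
  apply (Un_cv_ext (fun n => - lam * second_diff a n)).
  - intro n. pose proof (Htail n). lra.
  - replace 0 with (- lam * (l - 2 * l + l)) by ring.
    apply CV_mult; [apply Un_cv_const |].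
    apply CV_plus; [apply CV_minus |]; try assumption.
    apply (CV_mult (fun _ => 2)); [apply Un_cv_const | exact Hl1].
Qed.

Lemma tail_cv : continuity F -> Un_cv a c.
Proof.
  intros HF. destruct (Rle_lt_dec c (a 0%nat)) as [Habove | Hbelow].
  - assert (Hab : forall n, c <= a n)
      by (induction n; [exact Habove | apply tail_stays_above, IHn]).
    destruct (decreasing_cv a) as [l Hl].
    + intro n. apply tail_nonincreasing_above, Hab.
    + exists (- c). intros x [n ->]. unfold opp_seq. specialize (Hab n). lra.
    + assert (Hcl : c <= l) by exact (Rle_cv_lim Hab (Un_cv_const c) Hl).
      pose proof (tail_limit_root l HF Hl).
      replace c with l; [exact Hl |].
      destruct Hcl as [Hlt | Heq]; [pose proof (proj1 Hsplit l Hlt); lra | auto].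
  - assert (Hbe : forall n, a n <= c)
      by (induction n; [left; exact Hbelow | apply tail_stays_below, IHn]).
    destruct (growing_cv a) as [l Hl].
    + intro n. apply tail_nondecreasing_below, Hbe.
    + exists c. intros x [n ->]. apply Hbe.
    + assert (Hlc : l <= c) by exact (Rle_cv_lim Hbe Hl (Un_cv_const c)).
      assert (Hl0 : a 0%nat <= l).
      { apply (growing_ineq a); [| exact Hl]. intro n. apply tail_nondecreasing_below, Hbe. }
      pose proof (Hpos 0%nat). pose proof (tail_limit_root l HF Hl).
      replace c with l; [exact Hl |].
      destruct Hlc as [Hlt | Heq]; [pose proof (proj2 Hsplit l ltac:(lra)); lra | auto].
Qed.

End TailDynamics.

Definition tails_cv (u : Z -> R) (L : R) : Prop :=
  Un_cv (fun n => u (Z.of_nat n)) L /\ Un_cv (fun n => u (- Z.of_nat n)%Z) L.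

Lemma lim_abs_infty_of_tails_cv (u : Z -> R) (L : R) : tails_cv u L -> lim_abs_infty u L.
Proof.
  intros [Hright Hleft] eps Heps.
  destruct (Hright eps Heps) as [K1 HK1]. destruct (Hleft eps Heps) as [K2 HK2].
  exists (Z.of_nat (K1 + K2)). intros j Hj. destruct (Z_le_gt_dec 0 j) as [Hj0 | Hj0].
  - specialize (HK1 (Z.to_nat j) ltac:(lia)). rewrite Z2Nat.id in HK1 by lia. exact HK1.
  - specialize (HK2 (Z.to_nat (- j)) ltac:(lia)). rewrite Z2Nat.id, Z.opp_involutive in HK2 by lia.
    exact HK2.
Qed.

Lemma Z_spread (P : Z -> Prop) (j0 : Z) :
  P j0 -> (forall j, P j -> P (j + 1)%Z) -> (forall j, P j -> P (j - 1)%Z) -> forall j, P j.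
Proof.
  intros H0 Hup Hdown j. destruct (Z_le_gt_dec j0 j) as [Hj | Hj].
  - replace j with (j0 + Z.of_nat (Z.to_nat (j - j0)))%Z by lia.
    induction (Z.to_nat (j - j0)) as [| n IH]; [rewrite Z.add_0_r; exact H0 |].
    rewrite Nat2Z.inj_succ, Z.add_succ_r. apply Hup, IH.
  - replace j with (j0 - Z.of_nat (Z.to_nat (j0 - j)))%Z by lia.
    induction (Z.to_nat (j0 - j)) as [| n IH]; [rewrite Z.sub_0_r; exact H0 |].
    rewrite Nat2Z.inj_succ, Z.sub_succ_r. apply Hdown, IH.
Qed.

Lemma Z_nondecreasing (u : Z -> R) :
  (forall j, u (j - 1)%Z <= u j) -> forall j k, (j <= k)%Z -> u j <= u k.
Proof.
  intros Hstep j k Hjk. replace k with (j + Z.of_nat (Z.to_nat (k - j)))%Z by lia.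
  induction (Z.to_nat (k - j)) as [| n IH]; [rewrite Z.add_0_r; lra |].
  specialize (Hstep (j + Z.of_nat (S n))%Z).
  replace (j + Z.of_nat (S n) - 1)%Z with (j + Z.of_nat n)%Z in Hstep by lia. lra.
Qed.

Lemma Z_nondecreasing_lim_0 (u : Z -> R) :
  (forall j, u (j - 1)%Z <= u j) -> lim_abs_infty u 0 -> forall j, u j = 0.
Proof.
  intros Hstep Hlim j. pose proof (Z_nondecreasing u Hstep) as Hmono.
  destruct (Rtotal_order (u j) 0) as [Hneg | [Hzero | Hpos]]; [exfalso | exact Hzero | exfalso].
  - destruct (Hlim (- u j) ltac:(lra)) as [N HN].
    specialize (HN (Z.min j (- Z.abs N)) ltac:(lia)).
    specialize (Hmono _ j (Z.le_min_l j (- Z.abs N))).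
    rewrite Rminus_0_r in HN. apply Rabs_def2 in HN. lra.
  - destruct (Hlim (u j) Hpos) as [N HN].
    specialize (HN (Z.max j (Z.abs N)) ltac:(lia)).
    specialize (Hmono j _ (Z.le_max_l j (Z.abs N))).
    rewrite Rminus_0_r in HN. apply Rabs_def2 in HN. lra.
Qed.

Definition wronskian (I J : Z -> R) (j : Z) : R := I j * J (j + 1)%Z - I (j + 1)%Z * J j.

Lemma wronskian_tails_cv (I J : Z -> R) (L : R) :
  tails_cv I L -> tails_cv J L -> tails_cv (wronskian I J) 0.
Proof.
  intros [HIr HIl] [HJr HJl]. unfold wronskian.
  replace 0 with (L * L - L * L) by ring. split.
  - assert (Hnext : forall u : Z -> R, Un_cv (fun n => u (Z.of_nat n)) L ->
                      Un_cv (fun n => u (Z.of_nat n + 1)%Z) L).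
    { intros u Hu. apply (Un_cv_ext (fun n => u (Z.of_nat (S n)))).
      - intro n. rewrite Nat2Z.inj_succ. reflexivity.
      - apply (Un_cv_S (fun n => u (Z.of_nat n))), Hu. }
    apply CV_minus; apply CV_mult; auto.
  - apply (CV_shift _ 1).
    assert (Hprev : forall u : Z -> R, Un_cv (fun n => u (- Z.of_nat n)%Z) L ->
                      Un_cv (fun n => u (- Z.of_nat (n + 1) + 1)%Z) L).
    { intros u Hu. apply (Un_cv_ext (fun n => u (- Z.of_nat n)%Z)); [| exact Hu].
      intro n. f_equal. lia. }
    assert (Hcur : forall u : Z -> R, Un_cv (fun n => u (- Z.of_nat n)%Z) L ->
                      Un_cv (fun n => u (- Z.of_nat (n + 1))%Z) L).
    { intros u Hu. apply (CV_shift' (fun n => u (- Z.of_nat n)%Z)), Hu. }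
    apply CV_minus; apply CV_mult; auto.
Qed.

Section Lattice.

Variables s0 tau eta lam : R.
Hypotheses (Hs0 : 0 < s0) (Htau : 0 < tau) (Heta : 0 < eta) (Hlam : 0 < lam).

Local Notation f := (fSIR s0 tau eta).
Local Notation solution := (stationary_solution s0 tau eta lam).

Definition stationary_map (I0 I : Z -> R) (j : Z) : R :=
  (lam * (I (j - 1)%Z + I (j + 1)%Z) + s0 * (1 - exp (- tau * I j)) + I0 j) / (2 * lam + eta).

Lemma stationary_map_mono (I0 I I' : Z -> R) :
  (forall j, I j <= I' j) -> forall j, stationary_map I0 I j <= stationary_map I0 I' j.
Proof.
  intros HII' j. unfold stationary_map, Rdiv.
  apply Rmult_le_compat_r; [left; apply Rinv_0_lt_compat; lra |].
  pose proof (HII' (j - 1)%Z). pose proof (HII' (j + 1)%Z).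
  assert (exp (- tau * I' j) <= exp (- tau * I j)).
  { specialize (HII' j). destruct (Req_dec (I j) (I' j)) as [-> | Hne]; [lra |].
    left. apply exp_increasing. nra. }
  nra.
Qed.

Lemma stationary_map_fixed (I0 I : Z -> R) :
  solution I0 I <-> forall j, stationary_map I0 I j = I j.
Proof.
  unfold stationary_solution, stationary_map, fSIR. split; intros H j; specialize (H j).
  - field_simplify_eq; lra.
  - apply (f_equal (fun x => x * (2 * lam + eta))) in H.
    unfold Rdiv in H. rewrite Rmult_assoc, Rinv_l, Rmult_1_r in H by lra. lra.
Qed.

Lemma stationary_map_bounded (I0 : Z -> R) (j : Z) :
  (forall j, I0 j <= 1) ->
  stationary_map I0 (fun _ => (s0 + 1) / eta) j <= (s0 + 1) / eta.
Proof.
  intros HI0. set (M := (s0 + 1) / eta).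
  assert (HM : eta * M = s0 + 1) by (unfold M; field; lra).
  pose proof (exp_pos (- tau * M)). specialize (HI0 j).
  unfold stationary_map, Rdiv. apply (Rmult_le_reg_r (2 * lam + eta)); [lra |].
  rewrite Rmult_assoc, Rinv_l, Rmult_1_r by lra. nra.
Qed.

Definition stationary_iter (I0 : Z -> R) (n : nat) : Z -> R :=
  Nat.iter n (stationary_map I0) (fun _ => 0).

Lemma stationary_iter_nondecreasing (I0 : Z -> R) (n : nat) (j : Z) :
  (forall j, 0 <= I0 j) -> stationary_iter I0 n j <= stationary_iter I0 (S n) j.
Proof.
  intros HI0. revert j. induction n as [| n IH]; intro j.
  - simpl. unfold stationary_map. rewrite Rmult_0_r, exp_0.
    unfold Rdiv. apply Rmult_le_pos; [specialize (HI0 j); lra | left; apply Rinv_0_lt_compat; lra].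
  - apply stationary_map_mono, IH.
Qed.

Lemma stationary_iter_bounded (I0 : Z -> R) (n : nat) (j : Z) :
  (forall j, I0 j <= 1) -> stationary_iter I0 n j <= (s0 + 1) / eta.
Proof.
  intros HI0. revert j. induction n as [| n IH]; intro j.
  - simpl. left. apply Rdiv_lt_0_compat; lra.
  - eapply Rle_trans; [apply (stationary_map_mono I0 _ (fun _ => (s0 + 1) / eta) IH) |].
    apply stationary_map_bounded, HI0.
Qed.

Lemma stationary_iter_below (I0 J : Z -> R) (n : nat) (j : Z) :
  solution I0 J -> (forall j, 0 <= J j) -> stationary_iter I0 n j <= J j.
Proof.
  intros HJ HJnonneg. rewrite stationary_map_fixed in HJ. revert j.
  induction n as [| n IH]; intro j; [apply HJnonneg |].
  rewrite <- HJ. apply stationary_map_mono, IH.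
Qed.

Lemma stationary_map_continuous (I0 I : Z -> R) (u : nat -> Z -> R) (j : Z) :
  (forall k, Un_cv (fun n => u n k) (I k)) ->
  Un_cv (fun n => stationary_map I0 (u n) j) (stationary_map I0 I j).
Proof.
  intros Hu. unfold stationary_map, Rdiv.
  apply CV_mult; [| apply Un_cv_const].
  apply CV_plus; [apply CV_plus | apply Un_cv_const].
  - apply CV_mult; [apply Un_cv_const | apply CV_plus; apply Hu].
  - apply CV_mult; [apply Un_cv_const | apply CV_minus; [apply Un_cv_const |]].
    apply (continuity_seq exp); [apply derivable_continuous, derivable_exp |].
    apply CV_mult; [apply Un_cv_const | apply Hu].
Qed.

Lemma minimal_solution_exists (I0 : Z -> R) :
  (forall j, 0 <= I0 j <= 1) ->
  exists I, solution I0 I /\ (forall j, 0 <= I j <= (s0 + 1) / eta) /\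
    (forall J, solution I0 J -> (forall j, 0 <= J j) -> forall j, I j <= J j).
Proof.
  intros HI0.
  assert (Hcv : forall j, {l | Un_cv (fun n => stationary_iter I0 n j) l}).
  { intro j. apply growing_cv.
    - intro n. apply stationary_iter_nondecreasing. intro k. apply HI0.
    - exists ((s0 + 1) / eta). intros x [n ->]. apply stationary_iter_bounded. intro k. apply HI0. }
  set (I := fun j => proj1_sig (Hcv j)).
  assert (HI : forall j, Un_cv (fun n => stationary_iter I0 n j) (I j))
    by (intro j; apply (proj2_sig (Hcv j))).
  assert (Hbelow : forall J, solution I0 J -> (forall j, 0 <= J j) -> forall j, I j <= J j).
  { intros J HJ HJnonneg j.
    eapply Rle_cv_lim; [| exact (HI j) | apply Un_cv_const].
    intro n. apply stationary_iter_below; assumption. }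
  exists I. split; [| split; [intro j; split | exact Hbelow]].
  - apply stationary_map_fixed. intro j.
    apply (UL_sequence (fun n => stationary_iter I0 (S n) j)).
    + apply stationary_map_continuous, HI.
    + apply (Un_cv_S (fun n => stationary_iter I0 n j)), HI.
  - apply Rle_trans with (stationary_iter I0 0 j); [simpl; lra |].
    apply (growing_ineq (fun n => stationary_iter I0 n j)); [| exact (HI j)].
    intro m. apply stationary_iter_nondecreasing. intro k. apply HI0.
  - eapply Rle_cv_lim; [| exact (HI j) | apply Un_cv_const].
    intro n. apply stationary_iter_bounded. intro k. apply HI0.
Qed.

Lemma stationary_solution_reflect (I0 J : Z -> R) :
  solution I0 J -> solution (fun j => I0 (- j)%Z) (fun j => J (- j)%Z).
Proof.
  intros HJ j. specialize (HJ (- j)%Z).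
  replace (- j - 1)%Z with (- (j + 1))%Z in HJ by lia.
  replace (- j + 1)%Z with (- (j - 1))%Z in HJ by lia.
  lra.
Qed.

Lemma stationary_tail_equation (I0 J : Z -> R) (N : Z) (K : nat) :
  (forall j, (N < Z.abs j)%Z -> I0 j = 0) -> (N <= Z.of_nat K)%Z -> solution I0 J ->
  tail_equation lam f (fun n => J (Z.of_nat (n + K))).
Proof.
  intros HI0 HK HJ k. unfold second_diff.
  pose proof (HJ (Z.of_nat (S k + K))) as E. rewrite HI0 in E by lia.
  replace (Z.of_nat (S k + K) - 1)%Z with (Z.of_nat (k + K)) in E by lia.
  replace (Z.of_nat (S k + K) + 1)%Z with (Z.of_nat (S (S k) + K)) in E by lia.
  lra.
Qed.

Lemma stationary_right_tail_cv (I0 J : Z -> R) (c : R) :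
  sign_split f c -> finitely_supported I0 -> solution I0 J -> positive_seq J -> bounded_seq J ->
  Un_cv (fun n => J (Z.of_nat n)) c.
Proof.
  intros Hsplit [N HN] HJ HJpos [M HM].
  apply (CV_shift _ (Z.to_nat (Z.abs N))).
  apply (tail_cv lam f c M); auto.
  - apply (stationary_tail_equation I0 J N); [exact HN | lia | exact HJ].
  - intro k. eapply Rle_trans; [apply Rle_abs | apply HM].
  - apply fSIR_continuous.
Qed.

Lemma stationary_tails_cv (I0 J : Z -> R) (c : R) :
  sign_split f c -> finitely_supported I0 -> solution I0 J -> positive_seq J -> bounded_seq J ->
  tails_cv J c.
Proof.
  intros Hsplit [N HN] HJ HJpos [M HM]. split.
  - apply (stationary_right_tail_cv I0); auto; [exists N | exists M]; auto.
  - apply (stationary_right_tail_cv (fun j => I0 (- j)%Z) (fun j => J (- j)%Z)); auto.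
    + exists N. intros j Hj. apply HN. lia.
    + apply stationary_solution_reflect, HJ.
    + intro j. apply HJpos.
    + exists M. intro j. apply HM.
Qed.

Lemma stationary_solution_pos (I0 I : Z -> R) :
  solution I0 I -> (forall j, 0 <= I j) -> (forall j, 0 <= I0 j) -> (exists j0, 0 < I0 j0) ->
  positive_seq I.
Proof.
  intros HI Hnonneg HI0 [j0 Hj0] j.
  destruct (Hnonneg j) as [Hj | Hj]; [exact Hj | exfalso].
  assert (Hzero : forall k, I k = 0 -> I (k + 1)%Z = 0 /\ I (k - 1)%Z = 0 /\ I0 k = 0).
  { intros k Hk. pose proof (HI k) as E. unfold fSIR in E. rewrite Hk, Rmult_0_r, exp_0 in E.
    pose proof (Hnonneg (k + 1)%Z). pose proof (Hnonneg (k - 1)%Z). pose proof (HI0 k).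
    assert (0 <= lam * I (k + 1)%Z) by (apply Rmult_le_pos; lra).
    assert (0 <= lam * I (k - 1)%Z) by (apply Rmult_le_pos; lra).
    repeat split; nra. }
  assert (Hall : forall k, I k = 0) by (apply (Z_spread _ j); [auto | apply Hzero | apply Hzero]).
  destruct (Hzero j0 (Hall j0)) as [_ [_ H]]. lra.
Qed.

Lemma wronskian_step (I0 I J : Z -> R) (j : Z) :
  solution I0 I -> solution I0 J ->
  lam * (wronskian I J j - wronskian I J (j - 1)%Z)
  = J j * f (I j) - I j * f (J j) + I0 j * (J j - I j).
Proof.
  intros HI HJ. unfold wronskian. replace (j - 1 + 1)%Z with j by lia.
  pose proof (HI j). pose proof (HJ j).
  transitivity (I j * (lam * (J (j - 1)%Z + J (j + 1)%Z))
                - J j * (lam * (I (j - 1)%Z + I (j + 1)%Z))); [ring |].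
  replace (lam * (J (j - 1)%Z + J (j + 1)%Z)) with (2 * lam * J j - f (J j) - I0 j) by lra.
  replace (lam * (I (j - 1)%Z + I (j + 1)%Z)) with (2 * lam * I j - f (I j) - I0 j) by lra.
  ring.
Qed.

Lemma ordered_solutions_eq (I0 I J : Z -> R) (L : R) :
  (forall j, 0 <= I0 j) -> (exists j0, 0 < I0 j0) -> solution I0 I -> solution I0 J ->
  positive_seq I -> (forall j, I j <= J j) -> tails_cv I L -> tails_cv J L ->
  forall j, J j = I j.
Proof.
  intros HI0 [j0 Hj0] HI HJ HIpos HIJ HIL HJL.
  assert (Hstep : forall j, 0 <= I0 j * (J j - I j) /\ 0 <= J j * f (I j) - I j * f (J j)).
  { intro j. split; [apply Rmult_le_pos; [apply HI0 | specialize (HIJ j); lra] |].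
    pose proof (fSIR_ratio_le s0 tau eta Hs0 Htau (I j) (J j) (conj (HIpos j) (HIJ j))). lra. }
  assert (Hmono : forall j, wronskian I J (j - 1)%Z <= wronskian I J j).
  { intro j. pose proof (wronskian_step I0 I J j HI HJ). pose proof (Hstep j).
    apply (Rmult_le_reg_l lam); lra. }
  assert (Hzero : forall j, wronskian I J j = 0).
  { apply Z_nondecreasing_lim_0; [exact Hmono |].
    apply lim_abs_infty_of_tails_cv, (wronskian_tails_cv I J L HIL HJL). }
  assert (Hj0eq : J j0 = I j0).
  { pose proof (wronskian_step I0 I J j0 HI HJ) as E. rewrite !Hzero in E.
    pose proof (Hstep j0). assert (Hprod : I0 j0 * (J j0 - I j0) = 0) by lra.
    apply Rmult_integral in Hprod. destruct Hprod; lra. }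
  apply (Z_spread (fun j => J j = I j) j0 Hj0eq).
  - intros j Hj. pose proof (Hzero j) as W. unfold wronskian in W. rewrite Hj in W.
    apply (Rmult_eq_reg_l (I j)); [lra | pose proof (HIpos j); lra].
  - intros j Hj. pose proof (Hzero (j - 1)%Z) as W. unfold wronskian in W.
    replace (j - 1 + 1)%Z with j in W by lia. rewrite Hj in W.
    apply (Rmult_eq_reg_l (I j)); [lra | pose proof (HIpos j); lra].
Qed.

End Lattice.

Theorem theorem1 (s0 tau eta lambda : R) (I0 : Z -> R)
  (Hs0 : 0 < s0 < 1) (Htau : 0 < tau) (Heta : 0 < eta) (Hlam : 0 < lambda)
  (HI0fin : finitely_supported I0)
  (HI0range : forall j : Z, 0 <= I0 j < 1)
  (HI0pos : exists j : Z, 0 < I0 j) :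
  exists Iinf : Z -> R,
    stationary_solution s0 tau eta lambda I0 Iinf /\
    positive_seq Iinf /\ bounded_seq Iinf /\
    (forall J : Z -> R,
        stationary_solution s0 tau eta lambda I0 J ->
        positive_seq J -> bounded_seq J -> forall j : Z, J j = Iinf j) /\
    (R0_SIR s0 tau eta <= 1 -> lim_abs_infty Iinf 0) /\
    (1 < R0_SIR s0 tau eta ->
       exists Istar : R,
         0 < Istar /\ fSIR s0 tau eta Istar = 0 /\
         (forall v : R, 0 < v -> fSIR s0 tau eta v = 0 -> v = Istar) /\
         lim_abs_infty Iinf Istar).
Proof.
  destruct Hs0 as [Hs0 _].
  assert (HI0nonneg : forall j, 0 <= I0 j) by (intro j; apply HI0range).
  destruct (minimal_solution_exists s0 tau eta lambda Hs0 Htau Heta Hlam I0)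
    as [I [HI [Hrange Hmin]]].
  { intro j. specialize (HI0range j). lra. }
  destruct (fSIR_sign_split s0 tau eta Hs0 Htau Heta) as [c [Hsplit [Hc_le Hc_gt]]].
  assert (Hpos : positive_seq I).
  { apply (stationary_solution_pos s0 tau eta lambda Hlam I0); auto. intro j. apply Hrange. }
  assert (Hbnd : bounded_seq I).
  { exists ((s0 + 1) / eta). intro j. rewrite Rabs_right; [apply Hrange | apply Rle_ge, Hrange]. }
  assert (Htails : forall J, stationary_solution s0 tau eta lambda I0 J ->
                     positive_seq J -> bounded_seq J -> tails_cv J c)
    by (intros; apply (stationary_tails_cv s0 tau eta lambda Hlam I0); assumption).
  exists I. repeat split; auto.
  - intros J HJ HJpos HJbnd.
    apply (ordered_solutions_eq s0 tau eta lambda Hs0 Htau Hlam I0 I J c); auto.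
    apply Hmin; [exact HJ | intro j; left; apply HJpos].
  - intros HR. rewrite <- (Hc_le HR). apply lim_abs_infty_of_tails_cv; auto.
  - intros HR. destruct (Hc_gt HR) as [Hc Hfc]. exists c. repeat split; auto.
    + intros v Hv Hfv. apply (sign_split_pos_root _ _ _ Hsplit Hv Hfv).
    + apply lim_abs_infty_of_tails_cv; auto.
Qed.
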